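(* Let $\varphi:\mathbb R\to\mathbb R$ be a continuous mapping with $\sup_{x\in\mathbb R}\#\varphi^{-1}(x)<\infty$ and $U(\varphi)<\infty$. Then for any $a\in\mathbb R$ and $b>0$, the closed set $\varphi^{-1}([a-b,a+b])$ is a finite disjoint union of closed intervals $J_1,\dots,J_r$. Moreover, \[\sum_{i=1}^r|J_i|\le2\lceil b\rceil U(\varphi)\qquad\text{and}\qquad r\le\sup_{x\in\mathbb R}\#\varphi^{-1}(x),\] where $\lceil x\rceil$ is the smallest integer greater than or equal to $x$.
   Context: Notation: $|\cdot|$ is Lebesgue measure and $\#$ is cardinality. Definition: $U(\varphi)=\sup_{|I|=1}|\varphi^{-1}(I)|$, the supremum over closed intervals $I\subset\mathbb R$ of length $1$. *)

From HB Require Import structures.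
From mathcomp Require Import all_boot all_order all_algebra.
From mathcomp Require Import finmap.
From mathcomp Require Import all_classical all_reals all_analysis.
Set Implicit Arguments. Unset Strict Implicit. Unset Printing Implicit Defensive.
Import Order.TTheory GRing.Theory Num.Theory.
Import numFieldNormedType.Exports.
Local Open Scope classical_set_scope.
Local Open Scope ring_scope.

Definition fiber_card (R : realType) (phi : R -> R) (x : R) : \bar R :=
  if pselect (finite_set [set t | phi t = x])
  then ((#|` fset_set [set t | phi t = x]|%fset)%:R)%:E
  else +oo%E.

Definition fiber_sup (R : realType) (phi : R -> R) : \bar R :=
  ereal_sup (range (fiber_card phi)).

Definition Uphi (R : realType) (phi : R -> R) : \bar R :=
  ereal_sup [set (@lebesgue_measure R) (phi @^-1` `[x, x + 1]) | x in [set: R]].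

(* Let S = phi^-1([a - b, a + b]).  Covering [a - b, a + b] by 2 ceil(b) unit
   intervals bounds |S| by 2 ceil(b) U(phi) < oo.  By the intermediate value
   theorem, membership in S can only change at the finitely many points of
   phi^-1({a - b, a + b}); since S has finite measure it contains no half-line,
   so S is the union of finitely many disjoint closed intervals [c_i, d_i],
   i < r, with endpoints among these points, and their total length is |S|.
   Outside S, phi is at positive distance from [a - b, a + b].  Taking e below
   this distance at one point of each of the r + 1 gaps, phi takes a value
   a + b + e or a - b - e just left and just right of every component.  These
   2r points are distinct, so one of the two fibers has at least r of them. *)

From mathcomp Require Import all_boot all_order all_algebra finmap.
From mathcomp Require Import all_classical all_reals all_analysis.
From mathcomp Require Import lra.
Import Order.TTheory GRing.Theory Num.Theory.
Import numFieldNormedType.Exports.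
Local Open Scope classical_set_scope.
Local Open Scope ring_scope.

Lemma count_two_valued {T : Type} {P Q : pred T} {s : seq T} :
  all (predU P Q) s -> (size s <= count P s + count Q s)%N.
Proof. by rewrite all_count => /eqP <-; rewrite -count_predUI leq_addr. Qed.

Section itv_decomposition.
Set Implicit Arguments.
Unset Strict Implicit.
Variable R : realFieldType.
Implicit Types (S : set R) (s : seq R) (c d : nat -> R) (e x : R).

Definition itv_decomposition S r c d :=
  [/\ forall i, (i < r)%N -> c i <= d i,
      forall i j, (i < j)%N -> (j < r)%N -> d i < c j
    & S = \bigcup_(i in `I_r) `[c i, d i]%classic].

Lemma itv_decomposition_le S r c d i j : itv_decomposition S r c d ->
  (i <= j)%N -> (j < r)%N -> c i <= c j /\ d i <= d j.
Proof.
case=> cd dc _; rewrite leq_eqVlt => /predU1P[-> //|ij] jr.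
have := dc i j ij jr; have := cd i (ltn_trans ij jr); have := cd j jr; lra.
Qed.

Lemma itv_decomposition_disjoint S r c d i j : itv_decomposition S r c d ->
  (i < r)%N -> (j < r)%N -> i <> j -> `[c i, d i]%classic `&` `[c j, d j]%classic = set0.
Proof.
case=> _ dc _ ir jr ij; apply/seteqP; split => // t [] /=.
rewrite !in_itv /= => /andP[cit tdi] /andP[cjt tdj].
case: (ltngtP i j) => [lt|gt|/ij //].
- by have := dc i j lt jr; lra.
- by have := dc j i gt ir; lra.
Qed.

Lemma itv_decomposition_notin S r c d j x : itv_decomposition S r c d ->
  (j <= r)%N -> ((j < r)%N -> x < c j) -> ((0 < j)%N -> d j.-1 < x) -> ~ S x.
Proof.
move=> dec jr xc dx; case: (dec) => _ _ -> [i /= ir].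
rewrite in_itv /= => /andP[cix xdi].
case: (ltnP i j) => [ij|ji].
- have ij' : (i <= j.-1)%N by rewrite -ltnS (ltn_predK ij).
  have jr' : (j.-1 < r)%N by rewrite (ltn_predK ij).
  have [_] := itv_decomposition_le dec ij' jr'.
  by have := dx (leq_ltn_trans (leq0n i) ij); lra.
- have [+ _] := itv_decomposition_le dec ji ir.
  by have := xc (leq_ltn_trans ji ir); lra.
Qed.

Lemma itv_decomposition_separators S r c d : itv_decomposition S r c d ->
  exists w : nat -> R, forall j, (j <= r)%N ->
    [/\ ~ S (w j), (j < r)%N -> w j < c j & (0 < j)%N -> d j.-1 < w j].
Proof.
move=> dec; case: (dec) => _ dc _.
pose w j := if j == 0%N then c 0%N - 1
            else if j == r then d j.-1 + 1 else (d j.-1 + c j) / 2.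
have wc j : (j < r)%N -> w j < c j.
  rewrite /w; case: eqP => [-> _|/eqP j0 jr]; first lra.
  rewrite (ltn_eqF jr); have := dc j.-1 j; rewrite ltn_predL lt0n j0 => /(_ isT jr).
  lra.
have dw j : (0 < j)%N -> (j <= r)%N -> d j.-1 < w j.
  rewrite /w => j0 jr; rewrite (gtn_eqF j0); case: eqP => [_|/eqP jr']; first lra.
  have := dc j.-1 j; rewrite ltn_predL j0 ltn_neqAle jr' jr => /(_ isT isT).
  lra.
exists w => j jr; split=> [||j0]; [|exact: wc|exact: dw].
exact: itv_decomposition_notin dec jr (wc j) (dw j ^~ jr).
Qed.

Lemma itv_decomposition_head S r c d y : itv_decomposition S r c d ->
  S y -> (forall x, S x -> y <= x) -> (0 < r)%N /\ c 0%N = y.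
Proof.
move=> dec Sy ymin; case: (dec) => cd _ SE.
have [i /= ir] : (\bigcup_(i in `I_r) `[c i, d i]%classic) y by rewrite -SE.
rewrite in_itv /= => /andP[ciy _].
have r0 : (0 < r)%N := leq_ltn_trans (leq0n i) ir.
have [c0i _] := itv_decomposition_le dec (leq0n i) ir.
split=> //; apply/le_anti; rewrite (le_trans c0i ciy) ymin // SE.
by exists 0%N => //=; rewrite in_itv /= lexx cd.
Qed.

Lemma itv_decomposition_cons S r c d e : itv_decomposition S r c d ->
  ((0 < r)%N -> e < c 0%N) ->
  itv_decomposition (e |` S) r.+1
    (fun i => if i is j.+1 then c j else e) (fun i => if i is j.+1 then d j else e).
Proof.
move=> dec ec; case: (dec) => cd dc SE; split.
- by case=> [|i] /= ir; [exact: lexx | exact: cd].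
- case=> [|i] [|j] //= ij jr; last exact: dc.
  have [+ _] := itv_decomposition_le dec (leq0n j) jr.
  by have := ec (leq_ltn_trans (leq0n j) jr); lra.
- rewrite SE; apply/seteqP; split => x /=.
  + case=> [->|[i /= ir xi]]; first by exists 0%N; rewrite //= in_itv /= lexx.
    by exists i.+1.
  + case=> [[|i]] //= ir; first by rewrite in_itv /= -eq_le => /eqP <-; left.
    by move=> xi; right; exists i.
Qed.

Lemma itv_decomposition_widen S r c d e : itv_decomposition S r c d ->
  (0 < r)%N -> e <= c 0%N ->
  itv_decomposition (`[e, c 0%N]%classic `|` S) r (fun i => if i is 0 then e else c i) d.
Proof.
move=> dec r0 ec; case: (dec) => cd dc SE; split.
- by case=> [|i] ir; [exact: le_trans (cd _ r0) | exact: cd].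
- by move=> i [|j] //; exact: dc.
- rewrite SE; apply/seteqP; split => x /=.
  + case=> [|[[|i] /= ir]]; rewrite ?in_itv /= => /andP[ex xd].
    * by exists 0%N; rewrite //= in_itv /= ex (le_trans xd (cd _ r0)).
    * by exists 0%N; rewrite //= in_itv /= (le_trans ec ex) xd.
    * by exists i.+1; rewrite //= in_itv /= ex xd.
  + case=> [[|i]] /= ir; rewrite in_itv /= => /andP[ex xd].
    * have [xc|cx] := leP x (c 0%N); first by left; rewrite /= in_itv /= ex xc.
      by right; exists 0%N; rewrite //= in_itv /= (ltW cx) xd.
    * by right; exists i.+1; rewrite //= in_itv /= ex xd.
Qed.

Definition itv_constant_off s S :=
  forall x y, x <= y -> (forall z, z \in s -> ~~ (x <= z <= y)) -> S x <-> S y.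

Lemma itv_constant_off_open s S u v x y : itv_constant_off s S ->
  (forall z, z \in s -> (z <= u) || (v <= z)) -> u < x < v -> u < y < v ->
  S x <-> S y.
Proof.
move=> Sconst sout; wlog xy : x y / x <= y.
  by move=> wlog ux uy; have [xy|/ltW yx] := leP x y; [|symmetry]; exact: wlog.
move=> /andP[ux _] /andP[_ yv]; apply: Sconst => // z /sout; apply: contraL.
by case/andP=> xz zy; rewrite negb_or -!ltNge (lt_le_trans ux xz) (le_lt_trans zy yv).
Qed.

Lemma lt_sorted_head_le e s z : sorted <%R (e :: s) -> z \in e :: s -> e <= z.
Proof. by move=> /lt_path_min/allP hs; rewrite inE => /predU1P[->|/hs/ltW]. Qed.

Definition bounded_with_boundary s S :=
  [/\ forall z, z \in s -> S z, itv_constant_off s S,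
      forall x, S x -> exists2 z, z \in s & z <= x
    & forall x, S x -> exists2 z, z \in s & x <= z].

Lemma bounded_with_boundary_behead e e1 s S : sorted <%R [:: e, e1 & s] ->
  bounded_with_boundary [:: e, e1 & s] S ->
  bounded_with_boundary (e1 :: s) (S `&` [set x | e1 <= x]).
Proof.
move=> hs [sS Sconst _ Shi]; have ee1 : e < e1 by case/andP: hs.
split.
- move=> z zs; split; first by apply: sS; rewrite inE zs orbT.
  exact: lt_sorted_head_le (path_sorted hs) zs.
- move=> x y xy nos; have [e1x|xe1] := leP e1 x.
    have nos' z : z \in [:: e, e1 & s] -> ~~ (x <= z <= y).
      rewrite inE => /predU1P[->|]; last exact: nos.
      by rewrite leNgt (lt_le_trans ee1 e1x).
    have e1y := le_trans e1x xy.
    by split=> -[Sz _]; split=> //; apply/(Sconst x y xy nos').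
  have := nos e1 (mem_head _ _); rewrite (ltW xe1) /= -ltNge => ye1.
  by split=> -[_ /=]; rewrite leNgt ?xe1 ?ye1.
- by move=> x [_ e1x]; exists e1; rewrite ?mem_head.
- move=> x [Sx e1x]; have [z] := Shi x Sx; rewrite inE => /predU1P[-> xe|zs xz].
    by have := lt_le_trans ee1 (le_trans e1x xe); rewrite ltxx.
  by exists z.
Qed.

Lemma itv_decomposition_singleton e S : bounded_with_boundary [:: e] S ->
  itv_decomposition S 1 (fun=> e) (fun=> e).
Proof.
case=> sS _ Slo Shi; split=> [i _|i [|j] //|]; first exact: lexx.
apply/seteqP; split => x.
  move=> Sx; exists 0%N => //=; rewrite in_itv /=.
  have [z + zx] := Slo x Sx; rewrite inE => /eqP ez.
  have [z' + xz'] := Shi x Sx; rewrite inE => /eqP ez'.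
  by move: zx xz'; rewrite ez ez' => -> ->.
by case=> i /= _; rewrite in_itv /= -eq_le => /eqP <-; apply: sS; rewrite inE.
Qed.

Lemma itv_decomposition_of_boundary s S : sorted <%R s ->
  bounded_with_boundary s S -> exists r c d, itv_decomposition S r c d.
Proof.
elim: s S => [|e s IH] S hs Sb.
  exists 0%N, (fun=> 0), (fun=> 0); split => //; case: Sb => _ _ Slo _.
  by apply/seteqP; split => x; [case/Slo => z; rewrite in_nil | case].
case: s IH hs Sb => [|e1 s] IH hs Sb.
  by exists 1%N, (fun=> e), (fun=> e); exact: itv_decomposition_singleton.
case: (Sb) => sS Sconst Slo _.
have ee1 : e < e1 by case/andP: hs.
set S' := S `&` [set x | e1 <= x].
have [r [c [d dec]]] : exists r c d, itv_decomposition S' r c d.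
  exact: IH (path_sorted hs) (bounded_with_boundary_behead hs Sb).
have Sge x : S x -> e <= x.
  by case/Slo => z /(lt_sorted_head_le hs) /le_trans; apply.
have [r0 c0E] : (0 < r)%N /\ c 0%N = e1.
  apply: itv_decomposition_head dec _ _; last by move=> x [].
  by split; [apply: sS; rewrite !inE eqxx orbT | exact: lexx].
have gap x : e < x < e1 -> S x <-> S ((e + e1) / 2).
  move=> ex; apply: itv_constant_off_open Sconst _ ex _; last lra.
  move=> z; rewrite inE => /predU1P[->|zs]; first by rewrite lexx.
  by rewrite (lt_sorted_head_le (path_sorted hs)) ?orbT.
case: (pselect (S ((e + e1) / 2))) => Sm.
- exists r, (fun i => if i is 0 then e else c i), d.
  suff -> : S = `[e, c 0%N]%classic `|` S'.
    by apply: itv_decomposition_widen; rewrite // c0E ltW.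
  rewrite c0E; apply/seteqP; split => x /=.
  + move=> Sx; have [xe1|e1x] := ltP x e1; last by right.
    by left; rewrite in_itv /= Sge // ltW.
  + case=> [|[]//]; rewrite in_itv /= => /andP[ex xe1].
    move: ex; rewrite le_eqVlt => /predU1P[<-|ex]; first by apply: sS; rewrite mem_head.
    move: xe1; rewrite le_eqVlt => /predU1P[->|xe1].
      by apply: sS; rewrite !inE eqxx orbT.
    by apply/gap => //; rewrite ex xe1.
- exists r.+1, (fun i => if i is j.+1 then c j else e),
    (fun i => if i is j.+1 then d j else e).
  suff -> : S = e |` S' by apply: itv_decomposition_cons => // _; rewrite c0E.
  apply/seteqP; split => x /=.
  + move=> Sx; have [xe1|e1x] := ltP x e1; last by right.
    move: (Sge x Sx); rewrite le_eqVlt => /predU1P[<-|ex]; first by left.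
    by have := (gap x _).1 Sx; rewrite ex xe1 => /(_ isT).
  + by case=> [->|[]//]; apply: sS; rewrite mem_head.
Qed.

Lemma sorted_mkseq_between (b z : nat -> R) n :
  (forall k, (k < n)%N -> b k < z k < b k.+1) -> sorted <%R (mkseq z n).
Proof.
move=> bz; apply/(sortedP 0) => k; rewrite size_mkseq => kn.
have kn' := ltn_trans (ltnSn k) kn.
rewrite !nth_mkseq //; have /andP[_ zb] := bz k kn'; have /andP[bz' _] := bz k.+1 kn.
exact: lt_trans zb bz'.
Qed.

Lemma exists_pos_lt_finite (g : nat -> R) n : (forall j, (j <= n)%N -> 0 < g j) ->
  exists2 e, 0 < e & forall j, (j <= n)%N -> e < g j.
Proof.
elim: n => [|n IH] g0.
  exists (g 0%N / 2) => [|j]; first by rewrite divr_gt0 ?g0.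
  by rewrite leqn0 => /eqP ->; have := g0 0%N isT; lra.
have [e e0 eg] := IH (fun j jn => g0 j (leqW jn)).
have gn := g0 n.+1 (leqnn _).
exists (Num.min e (g n.+1 / 2)) => [|j]; first by rewrite lt_min e0 divr_gt0.
rewrite leq_eqVlt => /predU1P[->|jn]; rewrite gt_min; last by rewrite eg.
by apply/orP; right; lra.
Qed.

Lemma exists_level_between lo hi e u v : 0 < e -> lo <= u <= hi ->
  e < Num.max (lo - v) (v - hi) ->
  exists2 y, (y == hi + e) || (y == lo - e) & Num.min u v < y < Num.max u v.
Proof.
move=> e0 /andP[lou uhi]; rewrite lt_max => /orP[ve|ve].
  exists (lo - e); rewrite ?eqxx ?orbT // gt_min lt_max.
  by apply/andP; split; apply/orP; [right|left]; lra.
exists (hi + e); rewrite ?eqxx // gt_min lt_max.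
by apply/andP; split; apply/orP; [left|right]; lra.
Qed.

End itv_decomposition.

Section finite_measure.
Variable R : realType.
Implicit Types (S : set R) (s : seq R) (c d : nat -> R).
Local Notation mu := (@lebesgue_measure R).

Lemma lebesgue_measure_itv_cc (x y : R) : x <= y -> mu `[x, y]%classic = (y - x)%:E.
Proof.
move=> xy; rewrite lebesgue_measure_itv /= lte_fin; case: ltP => [_|yx].
  by rewrite EFinD.
have -> : y = x by apply/le_anti; rewrite yx xy.
by rewrite subrr.
Qed.

Lemma itv_decomposition_measure S r c d : itv_decomposition S r c d ->
  mu S = (\sum_(i < r) (d i - c i)%:E)%E.
Proof.
move=> dec; case: (dec) => cd _ SE.
have tri : trivIset `I_r (fun i => `[c i, d i]%classic).
  move=> i j /= ir jr [t ht]; apply/eqP; apply: contraT => /eqP ij.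
  by rewrite (itv_decomposition_disjoint dec ir jr ij) in ht.
have mitv i : measurable `[c i, d i]%classic by exact: measurable_itv.
rewrite SE bigcup_mkord (@measure_semi_additive_ord_I _ _ _ mu _ r (fun i _ => mitv i) tri);
  last exact: bigsetU_measurable.
by apply: eq_bigr => i _; exact: lebesgue_measure_itv_cc (cd i (ltn_ord i)).
Qed.

Lemma finite_measure_bounded_with_boundary s S : measurable S ->
  (mu S < +oo)%E -> (forall z, z \in s -> S z) -> itv_constant_off s S ->
  bounded_with_boundary s S.
Proof.
move=> mS Sfin sS Sconst; split=> // x Sx; apply: contrapT => nos.
- have ray : `]-oo, x] `<=` S.
    move=> y; rewrite /= in_itv /= => yx; apply/(Sconst y x yx) => // z zs.
    by apply/negP => /andP[_ zx]; apply: nos; exists z.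
  have : (mu `]-oo, x] <= mu S)%E by apply: le_measure; rewrite ?inE.
  by rewrite lebesgue_measure_itv /= ltNyr leNgt Sfin.
- have ray : `[x, +oo[ `<=` S.
    move=> y; rewrite /= in_itv /= andbT => xy; apply/(Sconst x y xy) => // z zs.
    by apply/negP => /andP[xz _]; apply: nos; exists z.
  have : (mu `[x, +oo[ <= mu S)%E by apply: le_measure; rewrite ?inE.
  by rewrite lebesgue_measure_itv /= ltry leNgt Sfin.
Qed.

End finite_measure.

Section continuous_preimage.
Variables (R : realType) (phi : R -> R).
Hypothesis phic : continuous phi.

Lemma closed_preimage_itv (lo hi : R) : closed (phi @^-1` `[lo, hi]%classic).
Proof. by apply: preimage_closed; [move=> ? _; exact: phic | exact: interval_closed]. Qed.

Lemma continuous_lt_const x y v : x <= y ->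
  (forall z, x <= z <= y -> phi z != v) -> (phi x < v) = (phi y < v).
Proof.
move=> xy nv.
have noIVT : ~ Num.min (phi x) (phi y) <= v <= Num.max (phi x) (phi y).
  move=> /(IVT xy (continuous_subspaceT phic)) [z].
  by rewrite in_itv /= => /nv/eqP.
by apply/idP/idP => h; rewrite ltNge; apply/negP => h'; apply: noIVT;
  rewrite ge_min le_max (ltW h) h' ?orbT.
Qed.

Lemma ivt_open x y v : x != y ->
  Num.min (phi x) (phi y) < v < Num.max (phi x) (phi y) ->
  exists2 z, Num.min x y < z < Num.max x y & phi z = v.
Proof.
wlog xy : x y / x < y.
  move=> wlog xny; have [xy|yx] : x < y \/ y < x by apply/orP; rewrite -neq_lt.
    exact: wlog.
  rewrite minC maxC [Num.min x y]minC [Num.max x y]maxC.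
  by apply: wlog; rewrite // eq_sym.
move=> _ /andP[vmin vmax].
have vbetween : Num.min (phi x) (phi y) <= v <= Num.max (phi x) (phi y).
  by rewrite (ltW vmin) (ltW vmax).
have [z] := IVT (ltW xy) (continuous_subspaceT phic) vbetween.
rewrite in_itv /= => /andP[xz zy] phiz; exists z => //.
rewrite (min_l (ltW xy)) (max_r (ltW xy)) !lt_neqAle xz zy !andbT.
by apply/andP; split; apply/eqP => ez; move: vmin vmax;
  rewrite -phiz -ez gt_min lt_max ltxx ?orbF /= => h1 h2; lra.
Qed.

Lemma preimage_itv_constant_off (lo hi : R) s :
  (forall t, phi t = lo \/ phi t = hi -> t \in s) ->
  itv_constant_off s (phi @^-1` `[lo, hi]%classic).
Proof.
move=> sfib x y xy nos.
have nlh z : x <= z <= y -> phi z != lo /\ phi z != hi.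
  move=> xzy; have /negP nzs : z \notin s by apply: contraL xzy; exact: nos.
  by split; apply/eqP => phiz; apply: nzs; apply: sfib; tauto.
have mem t : x <= t <= y -> (lo <= phi t <= hi) = ~~ (phi t < lo) && (phi t < hi).
  by move=> xty; rewrite [lo <= _]leNgt [phi t < hi]lt_neqAle (nlh t xty).2.
rewrite /= !in_itv /= !mem ?lexx ?xy //.
by rewrite (continuous_lt_const xy (fun z h => (nlh z h).1))
           (continuous_lt_const xy (fun z h => (nlh z h).2)).
Qed.

Lemma preimage_itv_crossing (lo hi e p q : R) : 0 < e -> lo <= phi p <= hi ->
  e < Num.max (lo - phi q) (phi q - hi) ->
  exists2 z, Num.min p q < z < Num.max p q & (phi z == hi + e) || (phi z == lo - e).
Proof.
move=> e0 Sp qfar; have [y yP ybetween] := exists_level_between e0 Sp qfar.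
have [|z zbetween phiz] := ivt_open (x := p) (y := q) _ ybetween; last first.
  by exists z; rewrite // phiz.
by apply/eqP => pq; move: ybetween; rewrite pq minxx maxxx => /andP[? ?]; lra.
Qed.

Lemma preimage_itv_crossings (lo hi : R) r c d :
  itv_decomposition (phi @^-1` `[lo, hi]%classic) r c d ->
  exists e, exists2 zs, uniq zs &
    size zs = r.*2 /\ all (fun t => (phi t == hi + e) || (phi t == lo - e)) zs.
Proof.
set S := phi @^-1` _ => dec; case: (dec) => cd _ SE.
have [w wP] := itv_decomposition_separators dec.
have far j : (j <= r)%N -> 0 < Num.max (lo - phi (w j)) (phi (w j) - hi).
  case/wP => + _ _; rewrite /S /= in_itv /= => /negP.
  by rewrite negb_and -!ltNge lt_max !subr_gt0.
have [e e0 ew] := exists_pos_lt_finite far.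
have Sc i : (i < r)%N -> (lo <= phi (c i) <= hi) /\ (lo <= phi (d i) <= hi).
  move=> ir; have Sx x : x \in `[c i, d i] -> lo <= phi x <= hi.
    move=> xi; have : S x by rewrite SE; exists i.
    by rewrite /S /= in_itv.
  by split; apply: Sx; rewrite in_itv /= lexx cd.
(* Breakpoints [w 0 < d 0 < w 1 < d 1 < ...]: the k-th crossing point lies in
   [(b k, b k.+1)], left of component [k./2] for even [k], right of it for odd [k]. *)
pose b k := if odd k then d k./2 else w k./2.
have hz k : exists z, (k < r.*2)%N ->
    b k < z < b k.+1 /\ (phi z == hi + e) || (phi z == lo - e).
  have [kr|_] := ltnP k r.*2; last by exists 0.
  have ir : (k./2 < r)%N by rewrite ltn_half_double.
  have [[_ _ dw] [_ wc _]] := (wP k./2.+1 ir, wP k./2 (ltnW ir)).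
  rewrite /b /= uphalf_half; case: (odd k); rewrite /= ?add0n ?add1n.
  - have [z + phiz] := preimage_itv_crossing e0 (Sc _ ir).2 (ew _ ir).
    by rewrite min_l ?max_r ?ltW ?dw // => dzw; exists z => _; split.
  - have [z + phiz] := preimage_itv_crossing e0 (Sc _ ir).1 (ew _ (ltnW ir)).
    rewrite min_r ?max_l ?ltW ?wc //; case/andP => wz zc; exists z => _; split=> //.
    by rewrite wz (lt_le_trans zc) ?cd.
have [z zP] := boolp.choice hz.
exists e, (mkseq z r.*2).
  by apply/lt_sorted_uniq/(sorted_mkseq_between (b := b)) => k /zP[].
split; first by rewrite size_mkseq.
by apply/allP => t /mapP[k]; rewrite mem_iota => /andP[_ kr] ->; case: (zP k kr).
Qed.

Lemma preimage_itv_decomposition_count (lo hi : R) r c d :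
  itv_decomposition (phi @^-1` `[lo, hi]%classic) r c d ->
  exists v, exists2 zs, uniq zs & (r <= count (fun t => phi t == v) zs)%N.
Proof.
move=> /preimage_itv_crossings [e [zs zs_uniq [zs_size zs_two]]].
set P := fun t => phi t == hi + e; set Q := fun t => phi t == lo - e.
have := count_two_valued (P := P) (Q := Q) zs_two; rewrite zs_size.
have [PQ|QP] := leqP (count P zs) (count Q zs) => rPQ.
- exists (lo - e), zs => //.
  by rewrite -leq_double (leq_trans rPQ) // -addnn leq_add2r.
- exists (hi + e), zs => //.
  by rewrite -leq_double (leq_trans rPQ) // -addnn leq_add2l ltnW.
Qed.

Lemma measurable_preimage_itv (lo hi : R) :
  measurable (phi @^-1` `[lo, hi]%classic).
Proof. apply: measurable_realfun.closed_measurable; exact: closed_preimage_itv. Qed.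

Lemma measure_preimage_itv_le (x : R) n : (0 < n)%N ->
  (lebesgue_measure (phi @^-1` `[x, (x + n%:R)%R]%classic) <= n%:R%:E * Uphi phi)%E.
Proof.
elim: n => [//|[|n] IH] _.
  by rewrite mul1e; apply: ereal_sup_ubound; exists x.
set y := x + n.+1%:R.
have cover : phi @^-1` `[x, x + n.+2%:R]%classic `<=`
    phi @^-1` `[x, y]%classic `|` phi @^-1` `[y, y + 1]%classic.
  move=> t; rewrite /= !in_itv /= -natr1 addrA -/y => /andP[xt ty].
  by have [tn|nt] := leP (phi t) y; [left; rewrite xt | right; rewrite ty ltW].
set U := _ `|` _ in cover.
have : (lebesgue_measure (phi @^-1` `[x, (x + n.+2%:R)%R]%classic) <= lebesgue_measure U)%E.
  apply: le_measure => //; rewrite inE;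
    [|apply: measurableU]; exact: measurable_preimage_itv.
move/le_trans; apply.
apply: (le_trans (measureU2 lebesgue_measure
  (measurable_preimage_itv x y) (measurable_preimage_itv y (y + 1)))).
rewrite -natr1 EFinD ge0_muleDl // mul1e; apply: leeD; first exact: IH.
by apply: ereal_sup_ubound; exists y.
Qed.

Lemma measure_preimage_itv_ceil_le (a b : R) : 0 < b ->
  (lebesgue_measure (phi @^-1` `[(a - b)%R, (a + b)%R]%classic) <=
    (2 * (Num.ceil b)%:~R)%:E * Uphi phi)%E.
Proof.
move=> b0; have [n nE] : exists n : nat, Num.ceil b = n%:Z.
  by exists `|Num.ceil b|%N; rewrite gez0_abs // ceil_ge0 (lt_trans _ b0) ?ltrN10.
have n0 : (0 < n)%N by rewrite -(ltz_nat 0) -nE ceil_gt0.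
have bn : b <= n%:R by rewrite -[n%:R]/((n%:Z)%:~R) -nE ceil_ge.
rewrite nE -[(n%:Z)%:~R]/(n%:R) -natrM.
have n2 : (0 < 2 * n)%N by rewrite muln_gt0 n0.
apply: (le_trans _ (measure_preimage_itv_le (a - b) n2)).
apply: le_measure; rewrite ?inE; try exact: measurable_preimage_itv.
move=> t; rewrite /= !in_itv /= => /andP[-> tb].
by rewrite natrM /=; lra.
Qed.

End continuous_preimage.

Section fibers.
Variables (R : realType) (phi : R -> R).

Lemma fiber_card_le_sup v : (fiber_card phi v <= fiber_sup phi)%E.
Proof. by apply: ereal_sup_ubound; exists v. Qed.

Lemma fiber_sup_ge_count v (s : seq R) : uniq s ->
  ((count (fun t => phi t == v) s)%:R%:E <= fiber_sup phi)%E.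
Proof.
move=> us; have := fiber_card_le_sup v; rewrite /fiber_card.
case: pselect => [fin|_] /(le_trans _); apply; last exact: leey.
rewrite lee_fin ler_nat -size_filter; apply: uniq_leq_size; first exact: filter_uniq.
by move=> t; rewrite mem_filter in_fset_set // inE => /andP[/eqP].
Qed.

Lemma finite_fiber v : (fiber_sup phi < +oo)%E -> finite_set [set t | phi t = v].
Proof.
move=> fib_lt; have := fiber_card_le_sup v; rewrite /fiber_card.
by case: pselect => [//|nfin] fib_ge; move: fib_lt; rewrite ltNge fib_ge.
Qed.

End fibers.

Lemma finite_set_sorted (R : realFieldType) (E : set R) : finite_set E ->
  exists s : seq R, sorted <%R s /\ forall t, t \in s <-> E t.
Proof.
move=> finE; exists (sort <=%R (fset_set E)); split.
  by rewrite lt_sorted_uniq_le sort_uniq fset_uniq sort_sorted //; exact: le_total.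
by move=> t; rewrite mem_sort in_fset_set // inE.
Qed.

Theorem lemma3p3 (R : realType) (phi : R -> R)
  (hcont : continuous phi)
  (hfib : (fiber_sup phi < +oo)%E)
  (hU : (Uphi phi < +oo)%E)
  (a b : R) (hb : 0 < b) :
  closed (phi @^-1` `[a - b, a + b]%classic) /\
  exists (r : nat) (c d : nat -> R),
    [/\ (forall i, (i < r)%N -> c i <= d i),
        (forall i j, (i < r)%N -> (j < r)%N -> i <> j ->
           `[c i, d i]%classic `&` `[c j, d j]%classic = set0),
        phi @^-1` `[a - b, a + b]%classic = \bigcup_(i in `I_r) `[c i, d i]%classic,
        (\sum_(i < r) (d i - c i)%:E <= (2 * (Num.ceil b)%:~R)%:E * Uphi phi)%E
      & ((r%:R)%:E <= fiber_sup phi)%E].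
Proof.
set S := phi @^-1` _; split; first exact: closed_preimage_itv.
have Sle := measure_preimage_itv_ceil_le hcont a hb.
have Sfin : (lebesgue_measure S < +oo)%E.
  apply: le_lt_trans Sle (lte_mul_pinfty _ _ hU) => //.
  by rewrite lee_fin mulr_ge0 // ler0z ceil_ge0 (lt_trans _ hb) ?ltrN10.
have [s [s_sorted s_mem]] : exists s : seq R, sorted <%R s /\
    forall t, t \in s <-> phi t = a - b \/ phi t = a + b.
  by apply: finite_set_sorted; rewrite finite_setU; split; exact: finite_fiber.
have sS z : z \in s -> S z.
  by move/s_mem; rewrite /S /= in_itv /= => -[] ->; apply/andP; split; lra.
have Sconst := preimage_itv_constant_off hcont (fun t => (s_mem t).2).
have [r [c [d dec]]] := itv_decomposition_of_boundary s_sorted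
  (finite_measure_bounded_with_boundary (measurable_preimage_itv hcont _ _) Sfin sS Sconst).
have [v [zs zs_uniq rv]] := preimage_itv_decomposition_count hcont dec.
exists r, c, d; case: (dec) => cd _ SE; split=> //.
- by move=> i j ir jr; exact: itv_decomposition_disjoint dec ir jr.
- by rewrite -(itv_decomposition_measure dec).
- by apply: le_trans (fiber_sup_ge_count phi v zs_uniq); rewrite lee_fin ler_nat.
Qed.
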